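(* Let $\mathcal G=(\mathcal V,\mathcal E,W)$ be a network, $h\in\mathbb{R}^{\mathcal V}$, and consider the SNC game with binary actions on $\mathcal G$ with external field $h$, with set of Nash equilibria $\mathcal N$. Let $\mathcal V=\mathcal R\cup\mathcal S$, $\mathcal R\cap\mathcal S=\emptyset$, be a binary partition such that $\mathcal G_{\mathcal R}$ is structurally balanced and $\mathcal G_{\mathcal S}$ is undirected. If there exists $\tau\in\{\pm1\}^{\mathcal R}$ such that $\tau_iW_{ij}\tau_j\ge0$ for all $i,j\in\mathcal R$ and $w_i^{\mathcal R}+\tau_ih_i\ge w_i^{\mathcal S}$ for all $i\in\mathcal R$, then there exists a Nash equilibrium $x^*\in\mathcal N$ with $x^*_{\mathcal R}=\tau$.
   Context: A network is a triple $\mathcal G=(\mathcal V,\mathcal E,W)$ where $\mathcal V$ is a finite nonempty set, $\mathcal E\subseteq\mathcal V\times\mathcal V$, and $W\in\mathbb{R}^{\mathcal V\times\mathcal V}$ has zero diagonal and satisfies $W_{ij}\neq0$ iff $(i,j)\in\mathcal E$ (weights may have either sign). It is undirected if its weight matrix is symmetric. For $\mathcal U\subseteq\mathcal V$, the subnetwork $\mathcal G_{\mathcal U}$ has node set $\mathcal U$, links $\mathcal E\cap(\mathcal U\times\mathcal U)$ and weight matrix $W_{\mathcal U\mathcal U}$. A network is structurally balanced if its node set can be written as a disjoint union of two sets with nonnegative weights on links within each set and nonpositive weights on links between the two sets. For $i\in\mathcal V$ and $\mathcal B\subseteq\mathcal V$, $w_i^{\mathcal B}=\sum_{j\in\mathcal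 B}|W_{ij}|$. The SNC game with binary actions on $\mathcal G$ with external field $h\in\mathbb{R}^{\mathcal V}$ has player set $\mathcal V$, action set $\{-1,+1\}$ for each player, strategy profiles $\mathcal X=\{\pm1\}^{\mathcal V}$, and utilities $u_i(x)=h_ix_i+x_i\sum_{j\in\mathcal V}W_{ij}x_j$. A Nash equilibrium is $x^*$ with $x^*_i\in\arg\max_{a\in\{\pm1\}}u_i(a,x^*_{-i})$ for all $i$. *)

From mathcomp Require Import all_boot all_order all_algebra.
Set Implicit Arguments. Unset Strict Implicit. Unset Printing Implicit Defensive.
Import Order.TTheory GRing.Theory Num.Theory.
Local Open Scope ring_scope.

Section Network.
Variables (R : realFieldType) (V : finType).

(* A network on the node set V is given by its weight matrix W; the link set
   is E = {(i,j) | W i j != 0}, so it is determined by W. *)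
Definition zero_diag (W : V -> V -> R) : Prop := forall i, W i i = 0.

Definition undirected_on (W : V -> V -> R) (U : {set V}) : Prop :=
  forall i j, i \in U -> j \in U -> W i j = W j i.

Definition struct_balanced_on (W : V -> V -> R) (U : {set V}) : Prop :=
  exists A : {set V}, forall i j, i \in U -> j \in U ->
    if (i \in A) == (j \in A) then 0 <= W i j else W i j <= 0.

Definition wdeg (W : V -> V -> R) (i : V) (B : {set V}) : R :=
  \sum_(j in B) `|W i j|.

Definition pm1 (a : R) : Prop := a = 1 \/ a = -1.

Definition profile (x : V -> R) : Prop := forall i, pm1 (x i).

Definition utility (W : V -> V -> R) (h : V -> R) (i : V) (x : V -> R) : R :=
  h i * x i + x i * \sum_(j : V) W i j * x j.

Definition deviate (x : V -> R) (i : V) (a : R) : V -> R :=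
  fun j => if j == i then a else x j.

Definition nash (W : V -> V -> R) (h : V -> R) (x : V -> R) : Prop :=
  profile x /\
  forall i a, pm1 a -> utility W h i (deviate x i a) <= utility W h i x.

End Network.

(** Fix the players of [Rs] at [tau]. The players of [Ss] then play an SNC
    game on the undirected network [G_Ss] with an external field [c] that
    absorbs the influence of [tau]. As [W] is symmetric on [Ss], a unilateral
    deviation changes the potential [sum_i (2 c_i + sum_j W_ij y_j) y_i] by
    twice the deviator's gain, so a profile maximising the potential is an
    equilibrium. Players of [Rs] cannot gain by deviating either: [tau] makes
    all their links inside [Rs] agree with them, which yields a payoff of
    [w_i^Rs + tau_i h_i], while links to [Ss] can cost at most [w_i^Ss]. *)

From mathcomp Require Import all_boot all_order all_algebra.
From mathcomp Require Import ring lra.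
Import Order.TTheory GRing.Theory Num.Theory.
Local Open Scope ring_scope.

Section BestResponse.
Context {R : realFieldType} {V : finType}.
Variables (W : V -> V -> R) (h : V -> R).

Lemma utility_deviate (x : V -> R) (i : V) (a : R) : W i i = 0 ->
  utility W h i (deviate x i a) = a * (h i + \sum_j W i j * x j).
Proof.
move=> Wii; rewrite /utility /deviate eqxx.
have -> : \sum_j W i j * (if j == i then a else x j) = \sum_j W i j * x j.
  by apply: eq_bigr => j _; case: eqP => [->|//]; rewrite Wii !mul0r.
ring.
Qed.

Lemma nash_local_field (x : V -> R) : zero_diag W -> profile x ->
  (forall i, 0 <= x i * (h i + \sum_j W i j * x j)) -> nash W h x.
Proof.
move=> W0 x_pm1 x_best; split=> // i a a_pm1; rewrite utility_deviate //.
have : utility W h i x = x i * (h i + \sum_j W i j * x j) by rewrite /utility; ring.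
by move: (x_best i) => + ->; case: a_pm1 (x_pm1 i) => -> [] ->; lra.
Qed.

End BestResponse.

Section SignedDegree.
Context {R : realFieldType} {V : finType}.
Variables (W : V -> V -> R) (x : V -> R) (i : V) (B : {set V}).
Hypothesis x_pm1 : profile x.

Lemma normr_pm1 {a : R} : pm1 a -> `|a| = 1.
Proof. by case=> ->; rewrite ?normrN normr1. Qed.

Lemma normr_signed_weight j : `|x i * W i j * x j| = `|W i j|.
Proof. by rewrite !normrM !(normr_pm1 (x_pm1 _)) mul1r mulr1. Qed.

Lemma signed_sum_ge_wdeg : - wdeg W i B <= x i * \sum_(j in B) W i j * x j.
Proof.
rewrite /wdeg mulr_sumr -sumrN; apply: ler_sum => j jB.
by rewrite mulrA -(normr_signed_weight j) lerNl ler_normr lexx orbT.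
Qed.

Lemma signed_sum_eq_wdeg : (forall j, j \in B -> 0 <= x i * W i j * x j) ->
  x i * \sum_(j in B) W i j * x j = wdeg W i B.
Proof.
move=> aligned; rewrite /wdeg mulr_sumr; apply: eq_bigr => j jB.
by rewrite mulrA -(normr_signed_weight j) ger0_norm ?aligned.
Qed.

End SignedDegree.

Section Potential.
Context {R : realFieldType} {V : finType}.
Variables (W : V -> V -> R) (S : {set V}) (c : V -> R).
Hypotheses (W0 : zero_diag W) (W_sym : undirected_on W S).

Definition potential (y : V -> R) : R :=
  \sum_(i in S) (2 * c i + \sum_(j in S) W i j * y j) * y i.

Lemma eq_potential {y y' : V -> R} : y =1 y' -> potential y = potential y'.
Proof.
move=> yy'; apply: eq_bigr => i _; rewrite yy'; congr ((_ + _) * _).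
by apply: eq_bigr => j _; rewrite yy'.
Qed.

Lemma sum_deviate (F y : V -> R) (k : V) (a : R) : k \in S ->
  \sum_(j in S) F j * deviate y k a j = \sum_(j in S) F j * y j + F k * (a - y k).
Proof.
move=> kS; rewrite (bigD1 k) // [in RHS](bigD1 k) //= /deviate eqxx.
have -> : \sum_(j in S | j != k) F j * (if j == k then a else y j)
        = \sum_(j in S | j != k) F j * y j.
  by apply: eq_bigr => j /andP[_ /negbTE ->].
ring.
Qed.

Lemma potential_deviate (y : V -> R) (k : V) (a : R) : k \in S ->
  potential (deviate y k a)
  = potential y + 2 * (a - y k) * (c k + \sum_(j in S) W k j * y j).
Proof.
move=> kS; rewrite /potential.
rewrite (eq_bigr (fun i => (2 * c i + \sum_(j in S) W i j * y j) * deviate y k a i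
                           + (a - y k) * (W i k * deviate y k a i))); last first.
  by move=> i _; rewrite sum_deviate //; ring.
rewrite big_split /= sum_deviate // -mulr_sumr (sum_deviate (W^~ k)) // W0.
have -> : \sum_(i in S) W i k * y i = \sum_(j in S) W k j * y j.
  by apply: eq_bigr => i iS; rewrite W_sym // mulrC.
ring.
Qed.

Definition spin (A : {set V}) (j : V) : R := if j \in A then 1 else -1.

Lemma spin_pm1 (A : {set V}) (j : V) : pm1 (spin A j).
Proof. by rewrite /spin; case: ifP; [left|right]. Qed.

Lemma spin_deviate (A : {set V}) (k : V) (a : R) : pm1 a ->
  spin [set j | if j == k then a == 1 else j \in A] =1 deviate (spin A) k a.
Proof.
move=> a_pm1 j; rewrite /spin /deviate inE; case: eqP => // _.
by case: a_pm1 => ->; rewrite ?eqxx // lt_eqF //; lra.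
Qed.

Lemma potential_argmax_best_response : exists A : {set V},
  forall i, i \in S -> 0 <= spin A i * (c i + \sum_(j in S) W i j * spin A j).
Proof.
pose A := [arg max_(A > set0) potential (spin A)]%O.
have A_max A' : potential (spin A') <= potential (spin A).
  by rewrite /A; case: arg_maxP => //= A0 _; apply.
exists A => i iS.
have flip_pm1 : pm1 (- spin A i).
  by case: (spin_pm1 A i) => ->; [right | left; rewrite opprK].
have := A_max [set j | if j == i then - spin A i == 1 else j \in A].
rewrite (eq_potential (spin_deviate A i _ flip_pm1)) potential_deviate //.
move: (c i + _) => F.
by case: (spin_pm1 A i) => ->; nra.
Qed.

End Potential.

Theorem corollary2 (R : realFieldType) (V : finType)
  (W : V -> V -> R) (h : V -> R) (Rs Ss : {set V}) (tau : V -> R) :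
  (0 < #|V|)%N ->
  zero_diag W ->
  Rs :|: Ss = setT ->
  Rs :&: Ss = set0 ->
  struct_balanced_on W Rs ->
  undirected_on W Ss ->
  (forall i, i \in Rs -> pm1 (tau i)) ->
  (forall i j, i \in Rs -> j \in Rs -> 0 <= tau i * W i j * tau j) ->
  (forall i, i \in Rs -> wdeg W i Ss <= wdeg W i Rs + tau i * h i) ->
  exists x : V -> R, nash W h x /\ (forall i, i \in Rs -> x i = tau i).
Proof.
(* Structural balance of [G_Rs] is witnessed by [tau] itself, hence unused. *)
move=> _ W0 RuS RiS _ S_sym tau_pm1 tau_aligned tau_deg.
have RdS : [disjoint Rs & Ss] by rewrite -setI_eq0 RiS.
have sum_RS (F : V -> R) : \sum_j F j = \sum_(j in Rs) F j + \sum_(j in Ss) F j.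
  by rewrite -bigU //; apply: eq_bigl => j; rewrite !inE -in_setU RuS inE.
have [A A_best] := potential_argmax_best_response W Ss
  (fun i => h i + \sum_(j in Rs) W i j * tau j) W0 S_sym.
pose x j := if j \in Rs then tau j else spin A j.
have x_pm1 : profile x.
  by move=> j; rewrite /x; case: ifP => [/tau_pm1 // | _]; exact: spin_pm1.
have xR i : \sum_(j in Rs) W i j * x j = \sum_(j in Rs) W i j * tau j.
  by apply: eq_bigr => j jR; rewrite /x jR.
have xS i : \sum_(j in Ss) W i j * x j = \sum_(j in Ss) W i j * spin A j.
  by apply: eq_bigr => j jS; rewrite /x (disjointFl RdS jS).
exists x; split; last by move=> i iR; rewrite /x iR.
apply: nash_local_field => // i; rewrite sum_RS.
have [iR | iNR] := boolP (i \in Rs).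
- have x_aligned j : j \in Rs -> 0 <= x i * W i j * x j.
    by move=> jR; rewrite /x iR jR; exact: tau_aligned.
  have := signed_sum_ge_wdeg W x i Ss x_pm1.
  rewrite !mulrDr (signed_sum_eq_wdeg W x i Rs x_pm1 x_aligned).
  have xi : x i = tau i by rewrite /x iR.
  by move: (tau_deg i iR); rewrite -xi; lra.
- have iS : i \in Ss by move: (in_setT i); rewrite -RuS inE (negbTE iNR).
  have -> : x i = spin A i by rewrite /x (negbTE iNR).
  by rewrite xR xS addrA; exact: A_best.
Qed.
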